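(* Let $G$ be a finitely generated torsion-free nilpotent group of nilpotency class $2$ with an involution $\ast$. Then $G$ contains a $\ast$-invariant Heisenberg subgroup; more precisely, there exist $x,y\in G$ with $[x,y]\ne 1$, $x^\ast\in\{x,x^{-1}\}$ and $y^\ast\in\{y,y^{-1}\}$.
   Context: An involution on a group is an anti-automorphism of order $2$. Commutators are $[x,y]=x^{-1}y^{-1}xy$. In a torsion-free group, two noncommuting elements whose commutator commutes with both generate a Heisenberg group $\langle x,y : [x,[x,y]]=[y,[x,y]]=1\rangle$. *)

From Stdlib Require Import List.
Import ListNotations.

Section GroupDefs.
Context {T : Type} (mul : T -> T -> T) (inv : T -> T) (one : T).

Definition is_group : Prop :=
  (forall x y z, mul x (mul y z) = mul (mul x y) z) /\
  (forall x, mul one x = x) /\ (forall x, mul x one = x) /\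
  (forall x, mul (inv x) x = one) /\ (forall x, mul x (inv x) = one).

Fixpoint gpow (x : T) (n : nat) : T :=
  match n with O => one | S k => mul x (gpow x k) end.

Definition comm (x y : T) : T := mul (mul (mul (inv x) (inv y)) x) y.

Inductive gen_by (S : T -> Prop) : T -> Prop :=
| gen_one : gen_by S one
| gen_base : forall x, S x -> gen_by S x
| gen_mul : forall x y, gen_by S x -> gen_by S y -> gen_by S (mul x y)
| gen_inv : forall x, gen_by S x -> gen_by S (inv x).

Definition finitely_generated : Prop :=
  exists gens : list T, forall g, gen_by (fun x => In x gens) g.

Definition torsion_free : Prop :=
  forall x n, 0 < n -> gpow x n = one -> x = one.

Definition nilpotent_class2 : Prop :=
  (forall x y z, comm (comm x y) z = one) /\ (exists x y, comm x y <> one).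

Definition is_involution (star : T -> T) : Prop :=
  (forall x y, star (mul x y) = mul (star y) (star x)) /\
  (forall x, star (star x) = x) /\
  (exists x, star x <> x).
End GroupDefs.

(* Write g' for the image of g under the involution.  For any g, the element
   g g' is fixed by the involution, and, writing t = g g'^-1, the element
   t^2 [g^-1, g']^-1 is inverted by it (the central factor corrects the
   discrepancy between t' and t^-1).  In class 2 the commutator is bilinear, so
   if both of these commute with h then [g', h] = [g, h]^-1 and [g, h]^4 = 1.
   Applying this to a, b with [a, b] <> 1, once on each side, shows that if all
   pairs of elements fixed or inverted by the involution commute, then
   [a, b]^16 = 1, contradicting torsion-freeness. *)
From Stdlib Require Import Classical Lia.

Section Group.
Context {T : Type} (mul : T -> T -> T) (inv : T -> T) (one : T).
Hypothesis mulA : forall x y z, mul x (mul y z) = mul (mul x y) z.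
Hypothesis mul1g : forall x, mul one x = x.
Hypothesis mulg1 : forall x, mul x one = x.
Hypothesis mulVg : forall x, mul (inv x) x = one.
Hypothesis mulgV : forall x, mul x (inv x) = one.

Local Notation cm := (comm mul inv).
Local Notation pw := (gpow mul one).

Lemma mulKg x y : mul (inv x) (mul x y) = y.
Proof. rewrite mulA, mulVg, mul1g. reflexivity. Qed.

Lemma mulKVg x y : mul x (mul (inv x) y) = y.
Proof. rewrite mulA, mulgV, mul1g. reflexivity. Qed.

Lemma mulgI z x y : mul z x = mul z y -> x = y.
Proof. intro H. rewrite <- (mulKg z x), H, mulKg. reflexivity. Qed.

Lemma invg_eq x y : mul x y = one -> y = inv x.
Proof. intro H. rewrite <- (mulKg x y), H, mulg1. reflexivity. Qed.

Lemma invgK x : inv (inv x) = x.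
Proof. symmetry. apply invg_eq, mulVg. Qed.

Lemma invg1 : inv one = one.
Proof. symmetry. apply invg_eq, mul1g. Qed.

Lemma invMg x y : inv (mul x y) = mul (inv y) (inv x).
Proof. symmetry. apply invg_eq. rewrite <- mulA, mulKVg, mulgV. reflexivity. Qed.

Lemma expgD x n m : pw x (n + m) = mul (pw x n) (pw x m).
Proof.
  induction n as [|n IH]; simpl.
  - rewrite mul1g. reflexivity.
  - rewrite IH, mulA. reflexivity.
Qed.

Lemma expgM x n m : pw (pw x n) m = pw x (m * n).
Proof.
  induction m as [|m IH]; simpl.
  - reflexivity.
  - rewrite IH, expgD. reflexivity.
Qed.

Lemma commgC x y : mul x y = mul (mul y x) (cm x y).
Proof. unfold comm. rewrite <- !mulA, mulKVg, mulKVg. reflexivity. Qed.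

Lemma commg_eq x y k : mul x y = mul (mul y x) k -> cm x y = k.
Proof.
  intro H. unfold comm. rewrite <- !mulA, H, <- (mulA y x k), mulKg, mulKg.
  reflexivity.
Qed.

Lemma commg1_commute x y : cm x y = one -> mul x y = mul y x.
Proof. intro H. rewrite commgC, H, mulg1. reflexivity. Qed.

Lemma commg1_sym x y : cm x y = one -> cm y x = one.
Proof. intro H. apply commg_eq. rewrite mulg1. symmetry. apply commg1_commute, H. Qed.

Lemma comm1g x : cm one x = one.
Proof. apply commg_eq. rewrite mul1g, !mulg1. reflexivity. Qed.

Lemma commg1 x : cm x one = one.
Proof. apply commg_eq. rewrite mul1g, !mulg1. reflexivity. Qed.

Section Class2.
Hypothesis comm_central : forall x y z, cm (cm x y) z = one.

Lemma commgM_central x y z : mul (cm x y) z = mul z (cm x y).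
Proof. apply commg1_commute, comm_central. Qed.

Lemma commMg x y h : cm (mul x y) h = mul (cm x h) (cm y h).
Proof.
  apply commg_eq.
  rewrite <- (mulA x y h), (commgC y h), (mulA x (mul h y)), (mulA x h y), (commgC x h).
  rewrite <- (mulA (mul h x) (cm x h) y), (commgM_central x h y).
  rewrite (mulA (mul h x) y (cm x h)), <- (mulA (mul (mul h x) y) (cm x h) (cm y h)).
  rewrite <- (mulA h x y). reflexivity.
Qed.

Lemma commgM h x y : cm h (mul x y) = mul (cm h x) (cm h y).
Proof.
  apply commg_eq.
  rewrite (mulA h x y), (commgC h x), <- (mulA (mul x h) (cm h x) y).
  rewrite (commgM_central h x y), (mulA (mul x h) y (cm h x)), <- (mulA x h y).
  rewrite (commgC h y), (mulA x (mul y h) (cm h y)), (mulA x y h).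
  rewrite <- (mulA (mul (mul x y) h) (cm h y) (cm h x)), (commgM_central h y (cm h x)).
  reflexivity.
Qed.

Lemma commVg x h : cm (inv x) h = inv (cm x h).
Proof. apply invg_eq. rewrite <- commMg, mulgV, comm1g. reflexivity. Qed.

Lemma commXg x h n : cm (pw x n) h = pw (cm x h) n.
Proof.
  induction n as [|n IH]; simpl.
  - apply comm1g.
  - rewrite commMg, IH. reflexivity.
Qed.

Lemma commgX h x n : cm h (pw x n) = pw (cm h x) n.
Proof.
  induction n as [|n IH]; simpl.
  - apply commg1.
  - rewrite commgM, IH. reflexivity.
Qed.

Section Involution.
Variable star : T -> T.
Hypothesis starM : forall x y, star (mul x y) = mul (star y) (star x).
Hypothesis starK : forall x, star (star x) = x.

Lemma star1 : star one = one.
Proof. apply (mulgI (star one)). rewrite mulg1, <- starM, mul1g. reflexivity. Qed.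

Lemma starV x : star (inv x) = inv (star x).
Proof. apply invg_eq. rewrite <- starM, mulVg, star1. reflexivity. Qed.

Definition star_fixed x := star x = x.
Definition star_inverted x := star x = inv x.

Definition sym_part g := mul g (star g).
Definition skew g := mul g (inv (star g)).
Definition skew_defect g := mul (skew g) (star (skew g)).
Definition asym_part g := mul (mul (skew g) (skew g)) (inv (skew_defect g)).

Lemma sym_part_fixed g : star_fixed (sym_part g).
Proof. unfold star_fixed, sym_part. rewrite starM, starK. reflexivity. Qed.

Lemma skew_defectE g : skew_defect g = cm (inv g) (star g).
Proof.
  unfold skew_defect, skew, comm.
  rewrite starM, starV, starK, invgK, !mulA. reflexivity.
Qed.

Lemma skew_defect_central g z : mul (skew_defect g) z = mul z (skew_defect g).
Proof. rewrite skew_defectE. apply commgM_central. Qed.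

Lemma star_skew g : star (skew g) = mul (inv (skew g)) (skew_defect g).
Proof. unfold skew_defect. rewrite mulKg. reflexivity. Qed.

Lemma asym_part_inverted g : star_inverted (asym_part g).
Proof.
  assert (Hfix : star (skew_defect g) = skew_defect g).
  { unfold skew_defect. rewrite starM, starK. reflexivity. }
  unfold star_inverted, asym_part.
  rewrite starM, starM, starV, Hfix, star_skew, invMg, invgK, invMg.
  rewrite <- (skew_defect_central g (inv (skew g))), !mulA, mulVg, mul1g.
  rewrite <- (skew_defect_central g (inv (skew g))). reflexivity.
Qed.

Lemma comm_sym_part g h : cm (sym_part g) h = mul (cm g h) (cm (star g) h).
Proof. apply commMg. Qed.

Lemma comm_asym_part g h :
  cm (asym_part g) h =
  mul (mul (cm g h) (inv (cm (star g) h))) (mul (cm g h) (inv (cm (star g) h))).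
Proof.
  unfold asym_part.
  rewrite commMg, commVg, skew_defectE, comm_central, invg1, mulg1.
  unfold skew. rewrite commMg, commMg, commVg. reflexivity.
Qed.

Lemma comm_pow4_of_sym_asym g h :
  cm (sym_part g) h = one -> cm (asym_part g) h = one -> pw (cm g h) 4 = one.
Proof.
  intros Hsym Hasym.
  rewrite comm_sym_part in Hsym. apply invg_eq in Hsym.
  rewrite comm_asym_part, Hsym, invgK in Hasym.
  simpl. rewrite mulg1, !mulA. rewrite !mulA in Hasym. exact Hasym.
Qed.

Definition star_stable x := star_fixed x \/ star_inverted x.

Lemma comm_pow16_of_stable_commute a b :
  (forall x y, star_stable x -> star_stable y -> cm x y = one) ->
  pw (cm a b) 16 = one.
Proof.
  intro Hall.
  assert (Hsym : star_stable (sym_part a) /\ star_stable (sym_part b)).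
  { split; left; apply sym_part_fixed. }
  assert (Hasym : star_stable (asym_part a) /\ star_stable (asym_part b)).
  { split; right; apply asym_part_inverted. }
  assert (Hb4 : forall x, star_stable x -> cm x (pw b 4) = one).
  { intros x Hx. apply commg1_sym. rewrite commXg.
    apply comm_pow4_of_sym_asym; apply commg1_sym, Hall; tauto. }
  change 16 with (4 * 4). rewrite <- (expgM (cm a b) 4 4), <- commgX.
  apply comm_pow4_of_sym_asym; apply Hb4; tauto.
Qed.

Hypothesis torsion_free : forall x n, 0 < n -> pw x n = one -> x = one.

Lemma exists_stable_noncommuting a b : cm a b <> one ->
  exists x y, cm x y <> one /\ star_stable x /\ star_stable y.
Proof.
  intro Hab. apply NNPP. intro Hnone. apply Hab.
  apply (torsion_free _ 16); [lia |].
  apply comm_pow16_of_stable_commute.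
  intros x y Hx Hy. apply NNPP. intro Hxy. apply Hnone. exists x, y. tauto.
Qed.

End Involution.
End Class2.
End Group.

Theorem lemma2p3 (T : Type) (mul : T -> T -> T) (inv : T -> T) (one : T)
  (star : T -> T) :
  is_group mul inv one ->
  finitely_generated mul inv one ->
  torsion_free mul one ->
  nilpotent_class2 mul inv one ->
  is_involution mul star ->
  exists x y : T,
    comm mul inv x y <> one /\
    (star x = x \/ star x = inv x) /\
    (star y = y \/ star y = inv y).
Proof.
  intros [HA [H1g [Hg1 [HVg HgV]]]] _ Htf [Hcentral [a [b Hab]]] [HstarM [HstarK _]].
  exact (exists_stable_noncommuting mul inv one HA H1g Hg1 HVg HgV Hcentral
           star HstarM HstarK Htf a b Hab).
Qed.
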